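(* Let $k_+,k_-$ be integers with $0\le k_-\le k_+$. Let $\psi(x)$ denote the smallest prime not smaller than $x$ and set $p\triangleq\psi(k_++k_-+1)$. Let $m,t$ be positive integers such that $2t\le p^{\lceil m/2\rceil}-2$, and set $n=p^m-1$. Then $\mathbb{Z}^n$ can be lattice packed by $\mathcal{B}(n,t,k_+,k_-)$ with density \[\delta = \frac{\sum_{i=0}^t \binom{n}{i}(k_++k_-)^i}{(n+1)^{\lceil 2t(1-1/p)\rceil} }.\]
   Context: $\mathcal{B}(n,t,k_+,k_-)=\{\mathbf{x}\in\mathbb{Z}^n : -k_-\le x_i\le k_+ \text{ for all } i,\ \mathrm{wt}(\mathbf{x})\le t\}$, where $\mathrm{wt}$ is the Hamming weight. A lattice packing of $\mathbb{Z}^n$ by $\mathcal{B}$ is a lattice $\Lambda\subseteq\mathbb{Z}^n$ (additive subgroup) such that the translates $\mathbf{v}+\mathcal{B}$, $\mathbf{v}\in\Lambda$, are pairwise disjoint; its density is $|\mathcal{B}|/\mathrm{vol}(\Lambda)$, where $\mathrm{vol}(\Lambda)=|\mathbb{Z}^n/\Lambda|$. *)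

From mathcomp Require Import all_boot all_order all_algebra.
Set Implicit Arguments. Unset Strict Implicit. Unset Printing Implicit Defensive.
Import Order.TTheory GRing.Theory Num.Theory.
Local Open Scope ring_scope.

Definition wt n (x : 'rV[int]_n) : nat := #|[set i : 'I_n | x 0 i != 0]|.

Definition Bball n (t kp km : nat) (x : 'rV[int]_n) : Prop :=
  (forall i : 'I_n, - (km%:Z) <= x 0 i <= kp%:Z) /\ (wt x <= t)%N.

Definition is_lattice n (L : 'rV[int]_n -> Prop) : Prop :=
  L 0 /\ (forall u v, L u -> L v -> L (u - v)).

(* vol(L) = |Z^n / L| = N : there are exactly N cosets, given by
   representatives r 0, ..., r (N-1). *)
Definition lattice_index n (L : 'rV[int]_n -> Prop) (N : nat) : Prop :=
  exists r : 'I_N -> 'rV[int]_n,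
    (forall i j, L (r i - r j) -> i = j) /\
    (forall x, exists i, L (x - r i)).

Definition set_card n (S : 'rV[int]_n -> Prop) (N : nat) : Prop :=
  exists s : seq 'rV[int]_n, uniq s /\ size s = N /\ (forall x, x \in s <-> S x).

Definition lattice_packing n (L : 'rV[int]_n -> Prop) (B : 'rV[int]_n -> Prop) : Prop :=
  is_lattice L /\
  forall u v, L u -> L v -> u <> v -> forall x, ~ (B (x - u) /\ B (x - v)).

Lemma psi_ex (x : nat) : exists p, prime p && (x <= p)%N.
Proof.
case: (prime_above x) => p lt_xp pr_p; exists p; rewrite pr_p /=.
exact: ltnW.
Qed.
Definition psi (x : nat) : nat := ex_minn (psi_ex x).

(* The lattice is the kernel of the syndrome map x |-> (sum_i x_i a^(i j))_(j in J) from Z^n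
   to F_(p^m)^|J|, where a is a primitive n-th root of unity and J = {1 <= j <= 2t | ~ p | j}.
   The syndrome at p j is the p-th power of the syndrome at j, so kernel vectors have all
   syndromes 1, ..., 2t equal to 0, and by the BCH bound a nonzero one has more than 2t entries
   that are nonzero mod p.  The difference of two points of the ball has at most 2t nonzero
   entries, all of absolute value at most k+ + k- < p, hence the translates are disjoint.
   The elements of J are prime to p and smaller than p^(ceil(m/2)), so j p^l = j' (mod n) with
   j, j' in J forces l = 0 and j = j'; with the orthogonality of the powers of a and the trace
   to F_p this makes the syndrome map onto.  So vol = p^(m |J|) = (n+1)^(2t - floor(2t/p)), and
   2t - floor(2t/p) = ceil(2t (1 - 1/p)). *)

From HB Require Import structures.
From mathcomp Require Import all_boot all_order all_algebra all_solvable all_field.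
From mathcomp Require Import zify ring.

Set Implicit Arguments.
Unset Strict Implicit.
Unset Printing Implicit Defensive.

Import Order.TTheory GRing.Theory Num.Theory.

Lemma uphalf_add_half m : uphalf m + m./2 = m.
Proof. by rewrite uphalf_half -addnA addnn odd_double_half. Qed.

Lemma cyclotomic_coset_neq p m j j' l : 1 < p -> 0 < l -> l <= m./2 ->
  j < p ^ uphalf m -> ~~ (p %| j') -> j' < p ^ m - 1 ->
  j * p ^ l != j' %[mod p ^ m - 1].
Proof.
move=> p_gt1 l_gt0 l_le j_lt ndvd_j' j'_lt; rewrite (modn_small j'_lt).
apply: contra ndvd_j' => /eqP <-.
have lt_jpl : j * p ^ l < p ^ m.
  rewrite -(uphalf_add_half m) expnD.
  apply: (@leq_trans (p ^ uphalf m * p ^ l)); first by rewrite ltn_pmul2r // expn_gt0 ltnW.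
  by rewrite leq_mul2l leq_exp2l // l_le orbT.
have : p %| j * p ^ l by rewrite dvdn_mull // dvdn_exp.
case: (ltnP (j * p ^ l) (p ^ m - 1)) => [lt|ge]; first by rewrite modn_small.
suff -> : j * p ^ l = p ^ m - 1 by rewrite modnn dvdn0.
by lia.
Qed.

Lemma cyclotomic_coset_eq0 p m j j' l : 1 < p -> ~~ (p %| j) -> ~~ (p %| j') ->
  j < p ^ uphalf m -> j' < p ^ uphalf m -> l < m ->
  j * p ^ l = j' %[mod p ^ m - 1] -> l = 0.
Proof.
(* Multiplying by p^(m - l) swaps the roles of j and j', so we may assume l <= m/2. *)
move=> p_gt1 ndvd_j ndvd_j' j_lt j'_lt l_lt; case: (posnP l) => // l_gt0.
have m_gt1 : 1 < m by lia.
have m_halves := uphalf_add_half m.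
have uphalf_le : uphalf m <= m./2 + 1 by rewrite uphalf_half addnC leq_add2l leq_b1.
have lt_pred k : k < p ^ uphalf m -> k < p ^ m - 1.
  have le_pexp : p ^ uphalf m <= p ^ m.-1 by rewrite leq_exp2l //; lia.
  have pm_ge : 2 * p ^ m.-1 <= p ^ m.
    by rewrite -[in leqRHS](prednK (ltnW m_gt1)) expnS leq_mul2r p_gt1 orbT.
  have pexp_gt1 : 1 < p ^ m.-1 by rewrite -{1}(expn0 p) ltn_exp2l //; lia.
  by lia.
case: (leqP l m./2) => [l_le|l_gt].
  move=> eq_jj'; have := cyclotomic_coset_neq p_gt1 l_gt0 l_le j_lt ndvd_j' (lt_pred _ j'_lt).
  by rewrite eq_jj' eqxx.
have l'_gt0 : 0 < m - l by rewrite subn_gt0.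
have l'_le : m - l <= m./2 by lia.
move=> eq_jj'; have pm_mod : p ^ m = 1 %[mod p ^ m - 1].
  by rewrite -{1}(@subnK 1 (p ^ m)) ?expn_gt0 ?(ltnW p_gt1) // modnDl.
have eq_j'j : j' * p ^ (m - l) = j %[mod p ^ m - 1].
  rewrite -modnMml -eq_jj' modnMml -mulnA -expnD subnKC ?(ltnW l_lt) //.
  by rewrite -modnMmr pm_mod modnMmr muln1.
have := cyclotomic_coset_neq p_gt1 l'_gt0 l'_le j'_lt ndvd_j (lt_pred _ j_lt).
by rewrite eq_j'j eqxx.
Qed.

Lemma count_dvdn_iota1 p N : 0 < p -> count (dvdn p) (iota 1 N) = N %/ p.
Proof.
move=> p_gt0; elim: N => [|N IHN]; first by rewrite div0n.
by rewrite -[N.+1]addn1 iotaD count_cat IHN /= addn0 add1n addn1 divnS // addnC.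
Qed.

Lemma size_filter_ndvdn_iota1 p N : 0 < p ->
  size [seq j <- iota 1 N | ~~ (p %| j)] = N - N %/ p.
Proof.
move=> p_gt0; have := count_predC (dvdn p) (iota 1 N).
rewrite count_dvdn_iota1 // size_iota size_filter => eq_N.
by rewrite -{2}eq_N addKn.
Qed.

Section FfunSupport.
Variables (aT rT : finType) (y : rT).

Definition ffun_supp (f : {ffun aT -> rT}) := [set x | f x != y].

Lemma card_ffun_supp_eq (D : {set aT}) :
  #|[set f | ffun_supp f == D]| = #|rT|.-1 ^ #|D|.
Proof.
rewrite -(cardC1 y) -(card_pffun_on y D (predC1 y)).
apply: eq_card => f; rewrite inE; apply/eqP/pffun_onP => [<-|[suppD onD]].
  split; first by apply/subsetP => x; rewrite /ffun_supp inE.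
  by move=> z /imageP[x + ->]; rewrite !inE.
apply/setP => x; rewrite inE; apply/idP/idP => [|xD]; first exact: (subsetP suppD).
by have := onD (f x) (map_f _ _); rewrite !inE mem_enum; apply.
Qed.

Lemma card_ffun_supp_size i :
  #|[set f | #|ffun_supp f| == i]| = 'C(#|aT|, i) * #|rT|.-1 ^ i.
Proof.
rewrite -sum1dep_card (partition_big ffun_supp (fun D => #|D| == i)) //=.
rewrite -card_draws -sum_nat_const; apply: eq_big => [D|D /eqP <-].
  by rewrite inE.
rewrite -card_ffun_supp_eq -sum1dep_card; apply: eq_bigl => f.
by case: (ffun_supp f =P D) => [->|]; rewrite ?eqxx ?andbF.
Qed.

Lemma card_ffun_supp_leq t :
  #|[set f | #|ffun_supp f| <= t]| = \sum_(i < t.+1) 'C(#|aT|, i) * #|rT|.-1 ^ i.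
Proof.
rewrite -sum1dep_card.
rewrite (partition_big (fun f => inord #|ffun_supp f| : 'I_t.+1) xpredT) //=.
apply: eq_bigr => i _; rewrite -card_ffun_supp_size -sum1dep_card.
apply: eq_bigl => f; case: leqP => [le_ft|lt_tf] /=.
  by rewrite -val_eqE /= inordK.
by apply/esym/eqP => eq_fi; move: lt_tf; rewrite eq_fi ltnNge -ltnS ltn_ord.
Qed.

End FfunSupport.

Local Open Scope ring_scope.

Lemma ceil_natr_mul_subrV (R : archiRealFieldType) (T p : nat) : (0 < p)%N ->
  Num.ceil (T%:R * (1 - p%:R^-1) : R) = (T - T %/ p)%N%:Z.
Proof.
move=> p_gt0; have p_neq0 : p%:R != 0 :> R by rewrite pnatr_eq0 -lt0n.
have -> : T%:R * (1 - p%:R^-1) = (T - T %/ p)%N%:R - (T %% p)%:R / p%:R :> R.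
  have eT : T%:R = (T %/ p)%:R * p%:R + (T %% p)%:R :> R.
    by rewrite -natrM -natrD -divn_eq.
  by rewrite natrB ?leq_div // eT; field.
apply: ceil_def; rewrite intrB !pmulrn; apply/andP; split.
  rewrite ltrBlDr -addrA ltrDl addrC subr_gt0.
  by rewrite ltr_pdivrMr ?ltr0n // mul1r ltr_nat ltn_pmod.
by rewrite gerBl divr_ge0.
Qed.

Lemma card_Bball n t kp km :
  set_card (@Bball n t kp km) (\sum_(i < t.+1) 'C(n, i) * (kp + km) ^ i)%N.
Proof.
pose shift (f : {ffun 'I_n -> 'I_(kp + km).+1}) : 'rV[int]_n :=
  \row_i ((f i : nat)%:Z - km%:Z).
have shiftE f i : shift f 0 i = (f i : nat)%:Z - km%:Z by rewrite mxE.
have shift_inj : injective shift.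
  move=> f1 f2 /rowP eq_f; apply/ffunP => i; apply: val_inj.
  by have := eq_f i; rewrite !shiftE => /addIr/eqP; rewrite eqz_nat => /eqP.
have wt_shift f : wt (shift f) = #|ffun_supp (inord km) f|.
  apply: eq_card => i; rewrite !inE shiftE subr_eq0 eqz_nat.
  by rewrite -val_eqE /= inordK // ltnS leq_addl.
exists [seq shift f | f in [set f | #|ffun_supp (inord km) f| <= t]%N]; split; [|split].
- by rewrite map_inj_uniq ?enum_uniq.
- by rewrite size_map -cardE card_ffun_supp_leq !card_ord.
move=> x; split.
  case/mapP=> f; rewrite mem_enum inE -wt_shift => wt_f ->; split=> // i.
  by rewrite shiftE; move: (nat_of_ord (f i)) (ltn_ord (f i)) => v; lia.
case=> x_bnd wt_x.
pose f := [ffun i : 'I_n => inord (absz (x 0 i + km%:Z)) : 'I_(kp + km).+1].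
have x_shift : x = shift f.
  apply/rowP => i; rewrite shiftE ffunE; move: (x 0 i) (x_bnd i) => v /andP[lo hi].
  have v_km_ge0 : 0 <= v + km%:Z by lia.
  rewrite inordK; first by rewrite gez0_abs ?addrK.
  by rewrite -ltz_nat gez0_abs //; lia.
by rewrite x_shift; apply: map_f; rewrite mem_enum inE -wt_shift -x_shift.
Qed.

Lemma is_lattice_kernel n (G : zmodType) (H : {additive 'rV[int]_n -> G}) :
  is_lattice (fun x => H x = 0).
Proof. by split=> [|u v Hu Hv]; rewrite ?raddf0 // raddfB Hu Hv subrr. Qed.

Lemma lattice_index_kernel n (G : finZmodType) (H : {additive 'rV[int]_n -> G}) :
  (forall g, exists x, H x = g) -> lattice_index (fun x => H x = 0) #|G|.
Proof.
move=> H_surj; have [r Hr] := fin_all_exists H_surj.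
exists (fun i => r (enum_val i)); split=> [i j|x].
  by rewrite raddfB !Hr => /eqP; rewrite subr_eq0 => /eqP/enum_val_inj.
by exists (enum_rank (H x)); rewrite raddfB Hr enum_rankK subrr.
Qed.

Lemma lattice_packing_sub n (L B : 'rV[int]_n -> Prop) : is_lattice L ->
  (forall a b, B a -> B b -> L (a - b) -> a = b) -> lattice_packing L B.
Proof.
move=> L_lat B_sep; split=> // u v Lu Lv neq_uv x [Bxu Bxv]; apply: neq_uv.
have L_uv : L ((x - v) - (x - u)).
  by rewrite opprB addrC addrA subrK; apply: L_lat.2.
by have /addrI/oppr_inj := B_sep _ _ Bxv Bxu L_uv.
Qed.

Lemma wt_sub n (a b : 'rV[int]_n) : (wt (a - b) <= wt a + wt b)%N.
Proof.
apply: leq_trans (leq_card_setU _ _); apply: subset_leq_card.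
apply/subsetP => i; rewrite !inE !mxE; apply: contraR.
by rewrite negb_or !negbK => /andP[/eqP -> /eqP ->]; rewrite subrr.
Qed.

Lemma Bball_sub n t kp km (a b : 'rV[int]_n) :
  Bball t kp km a -> Bball t kp km b ->
  (forall i, `|(a - b) 0 i|%R <= (kp + km)%:Z) /\ (wt (a - b) <= 2 * t)%N.
Proof.
move=> [a_bnd wt_a] [b_bnd wt_b]; split=> [i|].
  rewrite !mxE; move: (a 0 i) (b 0 i) (a_bnd i) (b_bnd i) => u v.
  by rewrite ler_norml; lia.
by apply: leq_trans (wt_sub a b) _; rewrite mul2n -addnn leq_add.
Qed.

Section PrimeCharacteristic.
Variables (R : nzRingType) (p : nat).
Hypothesis pcharR : p \in [pchar R].

Lemma natr_pchar_eq0 k : (k < p)%N -> (k%:R == 0 :> R) = (k == 0%N).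
Proof. by move=> k_lt; rewrite -(dvdn_pcharf pcharR) /dvdn modn_small. Qed.

Lemma intr_pchar_eq0 (c : int) : (`|c| < p)%N -> (c%:~R == 0 :> R) = (c == 0).
Proof.
case: c => k /= k_lt; first by rewrite -pmulrn natr_pchar_eq0.
by rewrite NegzE mulrNz oppr_eq0 -pmulrn natr_pchar_eq0.
Qed.

Lemma natr_pchar_inj i j : (i < p)%N -> (j < p)%N -> i%:R = j%:R :> R -> i = j.
Proof.
wlog le_ij : i j / (i <= j)%N => [sym|i_lt j_lt eq_ij].
  by case: (leqP i j) => [|/ltnW] le; [apply: sym | move=> *; apply/esym/sym].
apply/eqP; rewrite eqn_leq le_ij -subn_eq0 -natr_pchar_eq0 ?natrB ?eq_ij ?subrr ?eqxx //.
exact: leq_ltn_trans (leq_subr i j) j_lt.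
Qed.

End PrimeCharacteristic.

Lemma pFrobenius_fixed_natr (F : fieldType) p (x : F) : p \in [pchar F] ->
  x ^+ p = x -> exists c : nat, x = c%:R.
Proof.
move=> pcharF x_fixed.
case: (pickP (fun c : 'I_p => x == c%:R)) => [c /eqP ->|x_neq]; first by exists c.
exfalso; have p_gt1 := prime_gt1 (pcharf_prime pcharF).
pose roots := x :: [seq i%:R | i <- iota 0 p].
have size_XpX : size ('X^p - 'X : {poly F}) = p.+1.
  by rewrite size_polyDl ?size_polyXn // size_polyN size_polyX ltnS.
have XpX_neq0 : 'X^p - 'X != 0 :> {poly F} by rewrite -size_poly_eq0 size_XpX.
have roots_XpX : all (root ('X^p - 'X)) roots.
  apply/allP => y; rewrite inE => /orP[/eqP ->|/mapP[i _ ->]];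
    rewrite rootE !hornerE ?x_fixed ?subrr //.
  by rewrite -(pFrobenius_autE pcharF) pFrobenius_aut_nat subrr.
have uniq_roots : uniq roots.
  rewrite /= map_inj_in_uniq ?iota_uniq ?andbT => [|i j]; last first.
    rewrite !mem_iota !add0n => /andP[_ i_lt] /andP[_ j_lt].
    exact: (natr_pchar_inj pcharF i_lt j_lt).
  apply/mapP => -[i]; rewrite mem_iota add0n => /andP[_ i_lt] x_eq.
  by have := x_neq (Ordinal i_lt); rewrite /= x_eq eqxx.
have := max_poly_roots XpX_neq0 roots_XpX uniq_roots.
by rewrite size_XpX /= size_map size_iota ltnn.
Qed.

Lemma finField_prim_root (F : finFieldType) : exists z : F, #|F|.-1.-primitive_root z.
Proof.
pose units := [seq x <- enum F | x != 0].
have uniq_units : uniq units by rewrite filter_uniq ?enum_uniq.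
have size_units : size units = #|F|.-1.
  rewrite -(cardC1 (0 : F)) cardE; apply/perm_size/uniq_perm; rewrite ?enum_uniq // => x.
  by rewrite mem_filter !mem_enum andbT.
have /hasP[z _ z_prim] : has #|F|.-1.-primitive_root units; last by exists z.
have F_gt1 : (1 < #|F|)%N := finNzRing_gt1 F.
apply: has_prim_root; rewrite ?size_units //; first by lia.
apply/allP => x; rewrite mem_filter => /andP[x_neq0 _]; rewrite unity_rootE.
by apply/eqP/(mulfI x_neq0); rewrite mulr1 -exprS prednK ?expf_card // ltnW.
Qed.

Section PrimitiveRootSums.
Variables (R : idomainType) (n : nat) (z : R).

Lemma sum_mul_horner_syndrome (w : 'I_n -> R) r (P : {poly R}) :
  (size P <= r.+1)%N -> P`_0 = 0 ->
  (forall j, (0 < j <= r)%N -> \sum_(i < n) w i * z ^+ (i * j) = 0) ->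
  \sum_(i < n) w i * P.[z ^+ i] = 0.
Proof.
move=> size_P P0 syn0.
under eq_bigr => i _ do rewrite (horner_coef_wide _ size_P) mulr_sumr.
rewrite exchange_big big1 // => -[j j_lt] _ /=.
under eq_bigr => i _ do rewrite mulrCA -exprM.
rewrite -mulr_sumr; case: (posnP j) => [->|j_gt0]; first by rewrite P0 mul0r.
by rewrite syn0 ?mulr0 // j_gt0.
Qed.

Hypothesis z_prim : n.-primitive_root z.

Lemma sum_prim_root_expM e :
  \sum_(i < n) z ^+ (i * e) = if (n %| e)%N then n%:R else 0.
Proof.
under eq_bigr => i _ do rewrite mulnC exprM.
case: ifPn => [n_dvd|n_ndvd].
  rewrite (eq_bigr (fun=> 1)) ?sumr_const ?card_ord // => i _.
  by move: n_dvd; rewrite (prim_order_dvd z_prim) => /eqP ->; rewrite expr1n.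
have ze_neq1 : z ^+ e - 1 != 0 by rewrite subr_eq0 -(prim_order_dvd z_prim).
apply: (mulfI ze_neq1); rewrite -subrX1 -exprM mulnC exprM.
by rewrite (prim_expr_order z_prim) expr1n !subrr mulr0.
Qed.

Lemma bch_bound (w : 'I_n -> R) r : (#|[set i | w i != 0%R]| <= r)%N ->
  (forall j, (0 < j <= r)%N -> \sum_(i < n) w i * z ^+ (i * j) = 0) ->
  forall i, w i = 0.
Proof.
move=> supp_le syn0 k; apply/eqP/negPn/negP => wk_neq0.
pose T := [set i | w i != 0] :\ k.
pose P := 'X * \prod_(i <- enum T) ('X - (z ^+ i)%:P).
have size_P : (size P <= r.+1)%N.
  rewrite /P mulrC size_mulX ?monic_neq0 ?monic_prod_XsubC // size_prod_XsubC.
  by rewrite -cardE ltnS (leq_trans _ supp_le) // [leqRHS](cardsD1 k) inE wk_neq0.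
have P0 : P`_0 = 0 by rewrite coefXM.
have := sum_mul_horner_syndrome size_P P0 syn0.
rewrite (bigD1 k) //= big1 ?addr0 => [|i neq_ik]; last first.
  have [wi0|wi_neq0] := eqVneq (w i) 0; first by rewrite wi0 mul0r.
  rewrite hornerM horner_prod (bigD1_seq i) ?enum_uniq ?mem_enum ?inE ?neq_ik //=.
  by rewrite hornerXsubC subrr mul0r !mulr0.
move=> /eqP; apply/negP; rewrite mulf_neq0 // hornerM hornerX horner_prod.
rewrite mulf_neq0 ?expf_neq0 ?(prim_root_eq0 z_prim) -?lt0n ?(prim_order_gt0 z_prim) //.
rewrite prodf_seq_neq0; apply/allP => i; rewrite mem_enum !inE => /andP[neq_ik _] /=.
by rewrite hornerXsubC subr_eq0 (eq_prim_root_expr z_prim) !modn_small // eq_sym.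
Qed.

End PrimitiveRootSums.

Section SyndromeLattice.
Variables (F : finFieldType) (p m t : nat) (z : F).
Hypotheses (p_prime : prime p) (cardF : #|F| = (p ^ m)%N) (m_gt0 : (0 < m)%N).
Local Notation n := (p ^ m - 1)%N.
Hypothesis z_prim : n.-primitive_root z.

Let pcharF : p \in [pchar F] := card_finPcharP cardF p_prime.
Let p_gt1 : (1 < p)%N := prime_gt1 p_prime.

Lemma natr_pexp_pred : n%:R = - 1 :> F.
Proof.
have pm_gt0 : (0 < p ^ m)%N by rewrite expn_gt0 ltnW.
have : (p ^ m)%:R == 0 :> F by rewrite -(dvdn_pcharf pcharF) dvdn_exp.
by rewrite -{1}(subnK pm_gt0) natrD addr_eq0 => /eqP.
Qed.

Definition syndrome j (x : 'rV[int]_n) : F := \sum_(i < n) (x 0 i)%:~R * z ^+ (i * j).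

Lemma syndromeB j : {morph syndrome j : x y / x - y}.
Proof.
by move=> x y; rewrite -sumrB; apply: eq_bigr => i _; rewrite !mxE intrB mulrBl.
Qed.

Lemma syndromeMp j x : syndrome (j * p) x = syndrome j x ^+ p.
Proof.
rewrite -(pFrobenius_autE pcharF) rmorph_sum; apply: eq_bigr => i _ /=.
by rewrite rmorphM /= rmorph_int pFrobenius_autE -exprM mulnA.
Qed.

Definition syndrome_exps := [seq j <- iota 1 (2 * t) | ~~ (p %| j)%N].
Local Notation J := syndrome_exps.

Lemma syndrome_eq0_le d : (forall j, j \in J -> syndrome j d = 0) ->
  forall j, (0 < j <= 2 * t)%N -> syndrome j d = 0.
Proof.
move=> synJ; elim/ltn_ind => j IHj /andP[j_gt0 j_le].
have [p_dvd|p_ndvd] := boolP (p %| j)%N; last first.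
  by apply: synJ; rewrite mem_filter p_ndvd mem_iota add1n ltnS j_gt0.
have jp_lt : (j %/ p < j)%N by rewrite ltn_Pdiv.
have jp_range : (0 < j %/ p <= 2 * t)%N.
  by rewrite divn_gt0 ?(ltnW p_gt1) // dvdn_leq //= (leq_trans (leq_div j p)).
by rewrite -(divnK p_dvd) syndromeMp IHj // expr0n gtn_eqF // ltnW.
Qed.

Definition syndromes (x : 'rV[int]_n) : 'rV[F]_(size J) :=
  \row_k syndrome (nth 0%N J k) x.

Fact syndromes_is_zmod_morphism : zmod_morphism syndromes.
Proof. by move=> x y; apply/rowP => k; rewrite !mxE syndromeB. Qed.

HB.instance Definition _ :=
  GRing.isZmodMorphism.Build _ _ syndromes syndromes_is_zmod_morphism.

Lemma syndrome_small_eq0 (d : 'rV[int]_n) :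
  (forall i, `|d 0%R i| < p)%N -> (wt d <= 2 * t)%N ->
  syndromes d = 0 -> d = 0.
Proof.
move=> d_small wt_d /rowP syn_d; have synJ j : j \in J -> syndrome j d = 0.
  move=> jJ; have jJ_idx : (index j J < size J)%N by rewrite index_mem.
  by have := syn_d (Ordinal jJ_idx); rewrite !mxE /= nth_index.
apply/rowP => i; rewrite mxE; apply/eqP.
rewrite -(intr_pchar_eq0 pcharF) //; apply/eqP; move: i.
apply: (bch_bound z_prim (r := (2 * t)%N)); last exact: syndrome_eq0_le.
apply: leq_trans wt_d; apply/subset_leq_card/subsetP => i.
by rewrite !inE; apply: contra => /eqP ->.
Qed.

Definition ptrace (w : F) := \sum_(l < m) w ^+ (p ^ l).

Lemma ptrace_fixed w : ptrace w ^+ p = ptrace w.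
Proof.
rewrite /ptrace -(pFrobenius_autE pcharF) rmorph_sum /=.
under eq_bigr => l _ do rewrite pFrobenius_autE -exprM -expnSr.
rewrite -(prednK m_gt0) big_ord_recr [RHS]big_ord_recl /= prednK //.
by rewrite -cardF expf_card expn0 expr1 addrC.
Qed.

Hypothesis t_le : (2 * t <= p ^ uphalf m - 2)%N.

Lemma syndrome_expsP j : j \in J ->
  [/\ ~~ (p %| j)%N, j < p ^ uphalf m & j < n]%N.
Proof.
rewrite mem_filter mem_iota add1n ltnS => /andP[p_ndvd /andP[j_gt0 j_le]].
have : (p ^ uphalf m <= p ^ m)%N.
  by rewrite leq_exp2l // -[leqRHS](uphalf_add_half m) leq_addr.
by split=> //; lia.
Qed.

Lemma dvdn_syndrome_exps (k k' : 'I_(size J)) (l : 'I_m) :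
  (n %| nth 0%N J k * (n - 1) * p ^ l + nth 0%N J k')%N = (k == k') && (l == 0%N :> nat).
Proof.
have [ndvd_j j_lt j_ltn] := syndrome_expsP (mem_nth 0%N (ltn_ord k)).
have [ndvd_j' j'_lt j'_ltn] := syndrome_expsP (mem_nth 0%N (ltn_ord k')).
set j := nth 0%N J k; set j' := nth 0%N J k'.
have -> : (n %| j * (n - 1) * p ^ l + j')%N = (j * p ^ l == j' %[mod n])%N.
  have n_mul : (j * (n - 1) + j = j * n)%N.
    by rewrite -mulnSr subn1 prednK // (leq_ltn_trans _ j_ltn).
  rewrite /dvdn -[X in _ == X](mod0n n) -(eqn_modDr (j * p ^ l)) add0n addnAC.
  by rewrite -mulnDl n_mul mulnAC modnMDl eq_sym.
have uniq_J : uniq J by rewrite filter_uniq ?iota_uniq.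
apply/idP/andP => [/eqP eq_mod|[/eqP eq_kk' /eqP l0]]; last first.
  by rewrite l0 expn0 muln1 /j /j' eq_kk'.
have l0 := cyclotomic_coset_eq0 p_gt1 ndvd_j ndvd_j' j_lt j'_lt (ltn_ord l) eq_mod.
rewrite l0 expn0 muln1 !modn_small // in eq_mod; split; last by rewrite l0.
by rewrite -val_eqE /= -(nth_uniq 0%N (ltn_ord k) (ltn_ord k') uniq_J) -/j -/j' eq_mod.
Qed.

Lemma sum_ptrace_prim_root (a : F) (k k' : 'I_(size J)) :
  \sum_(i < n) ptrace (a * z ^+ (i * (nth 0%N J k * (n - 1)))) * z ^+ (i * nth 0%N J k')
    = - (a *+ (k == k')).
Proof.
under eq_bigr => i _ do rewrite mulr_suml.
rewrite exchange_big /=.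
under eq_bigr => l _ do under eq_bigr => i _ do
  rewrite exprMn -exprM -mulrA -exprD -mulnA -mulnDr.
under eq_bigr => l _ do rewrite -mulr_sumr (sum_prim_root_expM z_prim) dvdn_syndrome_exps.
rewrite (bigD1 (Ordinal m_gt0)) //= big1 ?addr0 => [|l l_neq0]; last first.
  by rewrite -val_eqE /= in l_neq0; rewrite (negPf l_neq0) andbF mulr0.
by rewrite andbT expn0 expr1; case: eqP; rewrite ?natr_pexp_pred ?mulrN1 ?mulr0 ?oppr0.
Qed.

Lemma syndromes_surj f : exists x, syndromes x = f.
Proof.
(* z ^+ (n - 1) is the inverse of z. *)
pose y (i : 'I_n) :=
  - \sum_(k < size J) ptrace (f 0 k * z ^+ (i * (nth 0%N J k * (n - 1)))).
have y_fixed i : y i ^+ p = y i.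
  rewrite -(pFrobenius_autE pcharF) rmorphN rmorph_sum /=; congr (- _).
  by apply: eq_bigr => k _; rewrite pFrobenius_autE ptrace_fixed.
have [c yE] := fin_all_exists (fun i => pFrobenius_fixed_natr pcharF (y_fixed i)).
exists (\row_i (c i)%:Z); apply/rowP => k'; rewrite mxE /syndrome.
under eq_bigr => i _ do rewrite mxE -pmulrn -yE mulNr mulr_suml.
rewrite sumrN exchange_big /=.
under eq_bigr => k _ do rewrite sum_ptrace_prim_root.
rewrite sumrN opprK (bigD1 k') //= eqxx mulr1n big1 ?addr0 // => k /negPf->.
by rewrite mulr0n.
Qed.

End SyndromeLattice.

Theorem corollary2 (kp km p m t : nat) :
  (km <= kp)%N ->
  p = psi (kp + km + 1) ->
  (0 < m)%N -> (0 < t)%N ->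
  (2 * t <= p ^ uphalf m - 2)%N ->
  exists (L : 'rV[int]_(p ^ m - 1) -> Prop) (V M : nat),
    lattice_packing L (Bball t kp km) /\
    lattice_index L V /\
    set_card (@Bball (p ^ m - 1) t kp km) M /\
    (M%:R / V%:R : rat) =
      (\sum_(i < t.+1) ('C(p ^ m - 1, i) * (kp + km) ^ i)%N%:R)
      / ((p ^ m - 1).+1%:R ^ Num.ceil ((2 * t)%:R * (1 - (p%:R)^-1) : rat)).
Proof.
move=> _ p_def m_gt0 _ t_le.
have [p_prime lt_kp] : prime p /\ (kp + km < p)%N.
  by rewrite p_def /psi addn1; case: ex_minnP => q /andP[].
have [F _ cardF] := pPrimePowerField p_prime m_gt0.
have [z] := finField_prim_root F; rewrite cardF -subn1 => z_prim.
pose H := syndromes t z : 'rV[int]_(p ^ m - 1) -> _.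
exists (fun x => H x = 0), #|{: 'rV[F]_(size (syndrome_exps p t))}|,
  (\sum_(i < t.+1) 'C(p ^ m - 1, i) * (kp + km) ^ i)%N; split; [|split; [|split]].
- apply: lattice_packing_sub (is_lattice_kernel H) _ => a b Ba Bb Hab.
  have [ab_small wt_ab] := Bball_sub Ba Bb.
  apply/eqP; rewrite -subr_eq0; apply/eqP.
  apply: (syndrome_small_eq0 p_prime cardF z_prim _ wt_ab Hab) => i.
  by rewrite -ltz_nat abszE (le_lt_trans (ab_small i)) // ltz_nat.
- apply: lattice_index_kernel; exact: syndromes_surj.
- exact: card_Bball.
rewrite card_mx mul1n cardF natr_sum size_filter_ndvdn_iota1 ?prime_gt0 //.
by rewrite ceil_natr_mul_subrV ?prime_gt0 // subn1 prednK ?expn_gt0 ?prime_gt0 // natrX.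
Qed.
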